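(* Let $G$ be an ordered graph, let $xy\in E(G)$, and let $(i,x)\in\mathbb N\times V(G)$. If $\mathrm{ht}_G(xy)\succ_{\mathrm{lex}}(i,x)$, then there is an edge $xz\in E(G)$ with $\mathrm{ht}_G(xz)=(i,x)$.
   Context: An ordered graph is a finite simple graph $G$ equipped with a total order $\le_G$ on $E(G)$ and a total order $\le^V_G$ on $V(G)$. Let $\mathbb N=\{1,2,\dots\}$. Define $\preceq_{\mathrm{lex}}$ on $\mathbb N\times V(G)$ by $(i,v)\preceq_{\mathrm{lex}}(i',v')$ iff $i<i'$, or $i=i'$ and $v\le^V_G v'$. The height table $\mathrm{HT}(G)$ is a partially filled array indexed by $\mathbb N\times V(G)$, built by going through all $(i,v)$ in $\preceq_{\mathrm{lex}}$-increasing order and setting the entry at $(i,v)$ to be the $\le_G$-largest edge containing $v$ not yet entered into the table (blank if none remain). Every edge is entered exactly once; $\mathrm{ht}_G(e)$ denotes the position of $e$ in $\mathrm{HT}(G)$, written as (row, column). *)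

From mathcomp Require Import all_boot.
Set Implicit Arguments. Unset Strict Implicit. Unset Printing Implicit Defensive.

(* An ordered graph: a finite simple graph on a finType V, given by a
   symmetric irreflexive adjacency relation [adj], together with a total
   order [vle] on V(G) and a total order [ele] on E(G). *)

Section OrderedGraph.
Variable V : finType.

Definition edges (adj : rel V) : {set {set V}} :=
  [set [set x; y] | x in V, y in [pred y | adj x y]].

Definition simple_graph (adj : rel V) : Prop :=
  symmetric adj /\ irreflexive adj.

Definition total_order_on (T : Type) (A : T -> Prop) (r : rel T) : Prop :=
  [/\ forall x, A x -> r x x,
      forall x y, A x -> A y -> r x y -> r y x -> x = y,
      forall x y z, A x -> A y -> A z -> r x y -> r y z -> r x z
    & forall x y, A x -> A y -> r x y || r y x].

Variables (vle : rel V) (ele : rel {set V}).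

Definition maxedge (R : {set {set V}}) (v : V) : option {set V} :=
  [pick e in R | (v \in e) && [forall f in R, (v \in f) ==> ele f e]].

(* entering (_, v) into the table with remaining edges R *)
Definition step (R : {set {set V}}) (v : V) : {set {set V}} :=
  if maxedge R v is Some e then R :\ e else R.

Definition vseq : seq V := sort vle (enum V).

(* remaining edges at the start of row i (rows indexed 1, 2, ...) *)
Definition rem_row (E : {set {set V}}) (i : nat) : {set {set V}} :=
  iter i.-1 (fun R => foldl step R vseq) E.

(* entry of HT(G) at position (i, v), i >= 1; None = blank *)
Definition entry (E : {set {set V}}) (i : nat) (v : V) : option {set V} :=
  maxedge (foldl step (rem_row E i) (take (index v vseq) vseq)) v.

Definition lexlt (p q : nat * V) : Prop :=
  p.1 < q.1 \/ (p.1 = q.1 /\ vle p.2 q.2 /\ p.2 <> q.2).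

End OrderedGraph.

From mathcomp Require Import all_boot.
Set Implicit Arguments. Unset Strict Implicit. Unset Printing Implicit Defensive.

(* Each entry of the height table removes an edge from the set of edges not
   yet entered, and entries are made in increasing lexicographic order, so
   this set only shrinks along that order.  If xy is entered after (i, x), it
   is still available when (i, x) is filled; hence x has an available edge at
   that moment, and the entry at (i, x) is the largest of these, an edge xz. *)

Lemma exists_max_in (T : eqType) (r : rel T) (s : seq T) :
  {in s, reflexive r} -> {in s & &, transitive r} -> {in s &, total r} ->
  s != [::] -> exists2 m, m \in s & {in s, forall g, r g m}.
Proof.
elim: s => // a [|b s] IH r_refl r_trans r_total _.
  by exists a => [|g /[!inE] /eqP->]; rewrite ?r_refl ?mem_head.
have sub_s : {subset b :: s <= a :: b :: s} := @mem_behead _ (a :: b :: s).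
have [m ms m_max] :=
  IH (sub_in1 sub_s r_refl) (sub_in3 sub_s r_trans) (sub_in2 sub_s r_total) isT.
have as_ : a \in a :: b :: s := mem_head _ _.
case/orP: (r_total a m as_ (sub_s _ ms)) => [am | ma].
- exists m => [|g /[1!inE] /predU1P[-> // | gs]]; [exact: sub_s | exact: m_max].
- exists a => // g /[1!inE] /predU1P[-> | gs]; first exact: r_refl.
  exact: (r_trans m g a (sub_s _ ms) (sub_s _ gs) as_ (m_max g gs) ma).
Qed.

Lemma edge_incident (V : finType) (adj : rel V) (e : {set V}) (x : V) :
  symmetric adj -> e \in edges adj -> x \in e ->
  exists2 z, adj x z & e = [set x; z].
Proof.
move=> sym /imset2P[a b _ /[!inE] ab ->] /set2P[-> | ->]; first by exists b.
by exists a; rewrite 1?sym // setUC.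
Qed.

Section HeightTable.
Variables (V : finType) (vle : rel V) (ele : rel {set V}).
Implicit Types (E R : {set {set V}}) (v : V).

Local Notation step := (step ele).
Local Notation vseq := (vseq vle).
Local Notation rem_row := (rem_row vle ele).
Local Notation next_row R := (foldl step R vseq).

Definition rem_at E i k := foldl step (rem_row E i) (take k vseq).

Lemma entryE E i v : entry vle ele E i v = maxedge ele (rem_at E i (index v vseq)) v.
Proof. by []. Qed.

Lemma maxedge_mem R v e : maxedge ele R v = Some e -> e \in R /\ v \in e.
Proof. by rewrite /maxedge; case: pickP => // f /and3P[fR vf _] [<-]. Qed.

Lemma maxedge_exists (P : {set V} -> Prop) R v e :
  total_order_on P ele -> (forall f, f \in R -> P f) -> e \in R -> v \in e ->
  exists f, maxedge ele R v = Some f.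
Proof.
move=> [e_refl _ e_trans e_total] RP eR ve.
rewrite /maxedge; case: pickP => [f _ | no_max]; first by exists f.
pose s := [seq f : {set V} <- enum R | v \in f].
have es : e \in s by rewrite mem_filter mem_enum ve eR.
have sP f : f \in s -> P f by rewrite mem_filter mem_enum => /andP[_ /RP].
have s_refl : {in s, reflexive ele} by move=> f /sP; apply: e_refl.
have s_trans : {in s & &, transitive ele}.
  by move=> g f h /sP Pg /sP Pf /sP Ph; apply: e_trans.
have s_total : {in s &, total ele} by move=> f g /sP Pf /sP Pg; apply: e_total.
have s_nil : s != [::] by apply/eqP => s0; rewrite s0 in es.
have [m ms m_max] := exists_max_in s_refl s_trans s_total s_nil.
move: ms; rewrite mem_filter mem_enum => /andP[vm mR].
have m_top : [forall f in R, (v \in f) ==> ele f m].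
  apply/forall_inP => f fR; apply/implyP => vf.
  by apply: m_max; rewrite mem_filter mem_enum vf fR.
by move: (no_max m); rewrite /= mR vm m_top.
Qed.

Lemma step_subset R v : step R v \subset R.
Proof. by rewrite /step; case: maxedge => // e; apply: subsetDl. Qed.

Lemma foldl_step_subset R s : foldl step R s \subset R.
Proof.
by elim: s R => //= v s IH R; apply: subset_trans (IH _) (step_subset _ _).
Qed.

Lemma iter_next_row_subset n R : iter n (fun R => next_row R) R \subset R.
Proof. by elim: n => //= n IH; apply: subset_trans (foldl_step_subset _ _) IH. Qed.

Lemma rem_row_antimono E i j : i <= j -> rem_row E j \subset rem_row E i.
Proof.
move=> ij; have ij' : i.-1 <= j.-1 by rewrite -!subn1 leq_sub2r.
rewrite /rem_row -(subnK ij') iterD.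
exact: iter_next_row_subset.
Qed.

Lemma rem_row_succ E i : 0 < i -> rem_row E i.+1 = next_row (rem_row E i).
Proof. by case: i. Qed.

Lemma rem_at_subset_row E i k : rem_at E i k \subset rem_row E i.
Proof. exact: foldl_step_subset. Qed.

Lemma rem_at_subset E i k : rem_at E i k \subset E.
Proof.
exact: subset_trans (rem_at_subset_row _ _ _) (rem_row_antimono E (leq0n i)).
Qed.

Lemma rem_row_succ_subset E i k : 0 < i -> rem_row E i.+1 \subset rem_at E i k.
Proof.
move=> i_gt0; rewrite rem_row_succ // -(cat_take_drop k vseq) foldl_cat.
exact: foldl_step_subset.
Qed.

Lemma rem_at_antimono_col E i k k' : k <= k' -> rem_at E i k' \subset rem_at E i k.
Proof.
move=> kk'; rewrite /rem_at -(take_takel vseq kk').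
by rewrite -{1}(cat_take_drop k (take k' vseq)) foldl_cat foldl_step_subset.
Qed.

Lemma rem_at_antimono E i j k k' : 0 < i -> i < j \/ i = j /\ k <= k' ->
  rem_at E j k' \subset rem_at E i k.
Proof.
move=> i_gt0 [ij | [<- kk']]; last exact: rem_at_antimono_col.
apply: subset_trans (rem_at_subset_row _ _ _) _.
exact: subset_trans (rem_row_antimono E ij) (rem_row_succ_subset _ _ i_gt0).
Qed.

Lemma index_vseq_le x w : total_order_on (fun _ => True) vle ->
  vle x w -> index x vseq <= index w vseq.
Proof.
move=> [_ v_anti v_trans v_total] xw; rewrite leqNgt; apply/negP => wx.
have v_tr : transitive vle by move=> b a c; apply: v_trans.
have v_tot : total vle by move=> a b; apply: v_total.
have inV u : u \in vseq by rewrite mem_sort mem_enum.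
have vle_wx := sorted_ltn_index v_tr (sort_sorted v_tot _) w x (inV w) (inV x) wx.
by rewrite (v_anti x w I I xw vle_wx) ltnn in wx.
Qed.

Lemma lexlt_rem_at_subset E i x j w : total_order_on (fun _ => True) vle ->
  0 < i -> lexlt vle (i, x) (j, w) ->
  rem_at E j (index w vseq) \subset rem_at E i (index x vseq).
Proof.
move=> v_ord i_gt0 ixjw; apply: rem_at_antimono => //.
by case: ixjw => /= [ij | [ij [xw _]]]; [left | right; rewrite index_vseq_le].
Qed.

End HeightTable.

Theorem mainTheorem12 (V : finType) (adj : rel V)
  (vle : rel V) (ele : rel {set V}) :
  simple_graph adj ->
  total_order_on (fun _ => True) vle ->
  total_order_on (fun e => e \in edges adj) ele ->
  forall (x y : V), adj x y ->
  forall (j : nat) (w : V), 0 < j ->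
    entry vle ele (edges adj) j w = Some [set x; y] ->
  forall (i : nat), 0 < i ->
    lexlt vle (i, x) (j, w) ->
    exists z : V, adj x z /\ entry vle ele (edges adj) i x = Some [set x; z].
Proof.
move=> [sym _] v_ord e_ord x y _ j w _ xy_at_jw i i_gt0 ix_lt_jw.
have [xy_rem _] := maxedge_mem xy_at_jw.
have xy_rem_ix :=
  subsetP (lexlt_rem_at_subset ele (edges adj) v_ord i_gt0 ix_lt_jw) _ xy_rem.
have rem_edges := subsetP (rem_at_subset vle ele (edges adj) i (index x (vseq vle))).
have [e x_max] := maxedge_exists e_ord rem_edges xy_rem_ix (setU11 x [set y]).
have [e_rem xe] := maxedge_mem x_max.
have [z xz e_xz] := edge_incident sym (rem_edges _ e_rem) xe.
by exists z; rewrite entryE x_max e_xz.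
Qed.
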